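(* Let $\Lambda$ be a row-finite $k$-graph with no sources. Suppose $\Lambda$ has no local periodicity at $u\in\Lambda^0$ and that $v\in\Lambda^0$ satisfies $v\le u$. Then $\Lambda$ has no local periodicity at $v$.
   Context: A $k$-graph is a countable category $\Lambda$ with a functor $d:\Lambda\to\mathbb{N}^k$ satisfying the factorization property: whenever $d(\lambda)=m+n$ there are unique $\mu,\nu$ with $\lambda=\mu\nu$, $d(\mu)=m$, $d(\nu)=n$. $\Lambda^n=d^{-1}(n)$, $\Lambda^0$ the vertices, $r,s$ range and source, $v\Lambda=\{\lambda: r(\lambda)=v\}$, $v\Lambda w=\{\lambda: r(\lambda)=v,s(\lambda)=w\}$. Row-finite: each $v\Lambda^n$ finite; no sources: $v\Lambda^{e_i}\ne\emptyset$ for all $v,i$. Write $v\le u$ iff $v\Lambda u\neq\emptyset$. For $0\le m\le n\le d(\lambda)$, $\lambda(m,n)$ is the unique path with $\lambda=\lambda'\lambda(m,n)\lambda''$, $d(\lambda')=m$, $d(\lambda(m,n))=n-m$. $\Lambda$ has no local periodicity at $v$ if for each $m\neq n\in\mathbb{N}^k$ there is $\lambda\in v\Lambda$ with $d(\lambda)\ge m\vee n$ and $\lambda(m,m+d(\lambda)-(m\vee n))\neq\lambda(n,n+d(\lambda)-(m\vee n))$ ($\vee$ = coordinatewise max). *)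

From Stdlib Require List.
From mathcomp Require Import all_boot.
Set Implicit Arguments. Unset Strict Implicit. Unset Printing Implicit Defensive.

Definition deg (k : nat) := {ffun 'I_k -> nat}.
Definition dzero k : deg k := [ffun _ => 0].
Definition dadd k (m n : deg k) : deg k := [ffun i => m i + n i].
Definition dsub k (m n : deg k) : deg k := [ffun i => m i - n i].
Definition djoin k (m n : deg k) : deg k := [ffun i => maxn (m i) (n i)].
Definition dle k (m n : deg k) : Prop := forall i, m i <= n i.
Definition dbasis k (i : 'I_k) : deg k := [ffun j => (j == i : nat)].

(* A k-graph: a countable category (objects = vertices, morphisms = paths,
   composition [comp mu nu] = "mu nu", meaningful when [s mu = r nu])
   together with a degree functor d : Lambda -> N^k with the unique
   factorization property. *)
Record kgraph (k : nat) := KGraph {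
  Obj : Type;
  Mor : Type;
  rg : Mor -> Obj;
  sc : Mor -> Obj;
  idm : Obj -> Mor;
  comp : Mor -> Mor -> Mor;
  dg : Mor -> deg k;
  Obj_countable : exists f : Obj -> nat, injective f;
  Mor_countable : exists f : Mor -> nat, injective f;
  rg_idm : forall v, rg (idm v) = v;
  sc_idm : forall v, sc (idm v) = v;
  rg_comp : forall mu nu, sc mu = rg nu -> rg (comp mu nu) = rg mu;
  sc_comp : forall mu nu, sc mu = rg nu -> sc (comp mu nu) = sc nu;
  comp_idl : forall mu, comp (idm (rg mu)) mu = mu;
  comp_idr : forall mu, comp mu (idm (sc mu)) = mu;
  compA : forall la mu nu, sc la = rg mu -> sc mu = rg nu ->
            comp la (comp mu nu) = comp (comp la mu) nu;
  dg_idm : forall v, dg (idm v) = dzero k;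
  dg_comp : forall mu nu, sc mu = rg nu -> dg (comp mu nu) = dadd (dg mu) (dg nu);
  factorization : forall la m n, dg la = dadd m n ->
    exists mu nu, [/\ sc mu = rg nu, comp mu nu = la, dg mu = m & dg nu = n] /\
      forall mu' nu', sc mu' = rg nu' -> comp mu' nu' = la ->
        dg mu' = m -> dg nu' = n -> mu' = mu /\ nu' = nu
}.

Section Defs.
Variables (k : nat) (L : kgraph k).

Definition row_finite : Prop :=
  forall (v : Obj L) (n : deg k), exists s : seq (Mor L),
    forall la, rg la = v -> dg la = n -> List.In la s.

Definition no_sources : Prop :=
  forall (v : Obj L) (i : 'I_k), exists la : Mor L, rg la = v /\ dg la = dbasis i.

Definition vle (v u : Obj L) : Prop := exists la : Mor L, rg la = v /\ sc la = u.

(* [segment la m n mid] : mid = la(m,n), i.e. la = la' mid la'' with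
   d(la') = m and d(mid) = n - m (for 0 <= m <= n <= d(la)). *)
Definition segment (la : Mor L) (m n : deg k) (mid : Mor L) : Prop :=
  exists la' la'', [/\ sc la' = rg mid, sc mid = rg la'',
    la = comp (comp la' mid) la'', dg la' = m & dg mid = dsub n m].

Definition no_local_periodicity (v : Obj L) : Prop :=
  forall m n : deg k, m <> n ->
    exists la : Mor L, [/\ rg la = v, dle (djoin m n) (dg la) &
      exists a b,
        [/\ segment la m (dadd m (dsub (dg la) (djoin m n))) a,
            segment la n (dadd n (dsub (dg la) (djoin m n))) b & a <> b]].

End Defs.

(* Prepending a path mu : v -> u to a witness la of aperiodicity at u gives a
   witness mu la at v: the two segments of mu la starting at degrees m and n
   are c a and e b, where a, b are the distinct segments of la and c, e are
   paths of degree d(mu); unique factorization in degrees (d(mu), d(a)) then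
   forces c a <> e b. *)
From Pilot Require Import Defs.
From mathcomp Require Import all_boot.
From mathcomp Require Import zify.
Set Implicit Arguments.
Unset Strict Implicit.

Section DegreeArithmetic.
Variable k : nat.
Implicit Types m n p l : deg k.

Lemma daddC m n : dadd m n = dadd n m.
Proof. by apply/ffunP => i; rewrite !ffunE addnC. Qed.

Lemma dsub_addKl m n : dsub (dadd m n) m = n.
Proof. by apply/ffunP => i; rewrite !ffunE addKn. Qed.

Lemma dle_addr m n : dle m (dadd m n).
Proof. by move=> i; rewrite ffunE leq_addr. Qed.

Lemma dle_addl m n : dle n (dadd m n).
Proof. by move=> i; rewrite ffunE leq_addl. Qed.

Lemma dsub_addA p m l n : dle n l ->
  dadd p (dadd m (dsub l n)) = dadd m (dsub (dadd p l) n).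
Proof. by move=> le_nl; apply/ffunP => i; rewrite !ffunE; have := le_nl i; lia. Qed.

Lemma dle_trans m n p : dle m n -> dle n p -> dle m p.
Proof. by move=> le_mn le_np i; exact: leq_trans (le_mn i) (le_np i). Qed.

End DegreeArithmetic.

Section PrependPath.
Variables (k : nat) (L : kgraph k).
Implicit Types (mu la a b c e : Mor L) (m n q : deg k).

Lemma dg_segment la m q a : segment la m q a -> dg a = dsub q m.
Proof. by case=> la' [la'' []]. Qed.

(* Split mu la' (of degree m + d(mu)) as c1 c with d(c1) = m, d(c) = d(mu). *)
Lemma segment_comp mu la m q a : sc mu = rg la -> dle m q -> segment la m q a ->
  exists c, [/\ sc c = rg a, dg c = dg mu &
    segment (Defs.comp mu la) m (dadd (dg mu) q) (Defs.comp c a)].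
Proof.
move=> s_mu le_mq [la' [la'' [s_la' s_a def_la dg_la' dg_a]]].
have r_la' : rg la' = rg la by rewrite def_la !rg_comp ?sc_comp.
have s_mu' : sc mu = rg la' by rewrite r_la'.
have dg_mula' : dg (Defs.comp mu la') = dadd m (dg mu)
  by rewrite dg_comp // dg_la' daddC.
have [c1 [c [[s_c1 def_c1c dg_c1 dg_c] _]]] := factorization dg_mula'.
have s_c : sc c = rg a by rewrite -s_la' -(sc_comp s_mu') -def_c1c sc_comp.
exists c; split => //; exists c1, la''; split.
- by rewrite rg_comp.
- by rewrite sc_comp.
- rewrite def_la (Defs.compA (la := mu)) ?rg_comp ?sc_comp //.
  by rewrite (Defs.compA s_mu' s_la') -def_c1c -(Defs.compA s_c1 s_c).
- by [].
- rewrite dg_comp // dg_c dg_a; apply/ffunP => i; rewrite !ffunE.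
  by have := le_mq i; lia.
Qed.

Lemma comp_cancel_deg c a e b : sc c = rg a -> sc e = rg b ->
  dg c = dg e -> dg a = dg b -> Defs.comp c a = Defs.comp e b -> a = b.
Proof.
move=> s_c s_e dg_ce dg_ab def_ca.
have [x [y [_ uniq_xy]]] := factorization (dg_comp s_c).
have [_ ->] := uniq_xy c a s_c erefl erefl erefl.
by have [_ ->] := uniq_xy e b s_e (esym def_ca) (esym dg_ce) (esym dg_ab).
Qed.

End PrependPath.

Theorem lemma3p6 (k : nat) (L : kgraph k) (u v : Obj L) :
  row_finite L -> no_sources L ->
  no_local_periodicity u -> vle v u ->
  no_local_periodicity v.
Proof.
move=> _ _ aper_u [mu [r_mu s_mu]] m n ne_mn.
have [la [r_la le_la [a [b [seg_a seg_b ne_ab]]]]] := aper_u m n ne_mn.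
have s_mu' : sc mu = rg la by rewrite s_mu r_la.
have [c [s_c dg_c seg_ca]] := segment_comp s_mu' (dle_addr _ _) seg_a.
have [e [s_e dg_e seg_eb]] := segment_comp s_mu' (dle_addr _ _) seg_b.
exists (Defs.comp mu la); split.
- by rewrite rg_comp.
- by rewrite dg_comp //; exact: dle_trans le_la (dle_addl _ _).
exists (Defs.comp c a), (Defs.comp e b); split.
- by rewrite dg_comp // -dsub_addA.
- by rewrite dg_comp // -dsub_addA.
- move/(comp_cancel_deg s_c s_e); rewrite dg_c dg_e.
  by rewrite (dg_segment seg_a) (dg_segment seg_b) !dsub_addKl => /(_ erefl erefl).
Qed.
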